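(* Induced subposets of c.i.-posets are c.i.-posets: if $P$ is a c.i.-poset and $Q$ is a poset admitting an injective map $i:Q\to P$ with $i(q)\le_Pi(q')$ if and only if $q\le_Qq'$, then $Q$ is a c.i.-poset.
   Context: All posets are finite. For a finite poset $P$, a connected order ideal is a nonempty downward-closed subset whose induced Hasse diagram is connected; $\mathcal{J}_{\mathrm{conn}}(P)$ denotes the set of these; two connected order ideals intersect nontrivially if they are neither disjoint nor nested, and $\Pi(P)$ is the set of such unordered pairs. $P$ is a c.i.-poset if $|\mathcal{J}_{\mathrm{conn}}(P)|-|\Pi(P)|=|P|$; equivalently, for any field $k$, the presentation of the ring $R_P$ (the span in $k[x_p:p\in P]$ of the monomials $\prod_px_p^{f(p)}$ over $f:P\to\mathbb{N}$ with $f(p)\ge f(p')$ whenever $p<_Pp'$) as the quotient of $k[U_J]_{J\in\mathcal{J}_{\mathrm{conn}}(P)}$ via $U_J\mapsto\prod_{p\in J}x_p$ is a complete intersection presentation; equivalently, every connected order ideal of $P$ is either principal or nearly principal, where a non-principal connected order ideal $J$ is nearly principal if exactly one pair $\{J_1,J_2\}\in\Pi(P)$ has $J_1\cup J_2=J$. *)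

From HB Require Import structures.
From mathcomp Require Import all_boot all_order.
Set Implicit Arguments. Unset Strict Implicit. Unset Printing Implicit Defensive.
Import Order.Theory.
Local Open Scope order_scope.

Section CIPoset.
Context {d : Order.disp_t} {T : finPOrderType d}.

Definition covers (x y : T) : bool :=
  (x < y) && [forall z : T, ~~ ((x < z) && (z < y))].

Definition hasse_adj (x y : T) : bool := covers x y || covers y x.

Definition hasse_rel (J : {set T}) : rel T :=
  fun x y => [&& x \in J, y \in J & hasse_adj x y].

Definition hasse_connected (J : {set T}) : bool :=
  [forall x in J, forall y in J, connect (hasse_rel J) x y].

Definition down_closed (J : {set T}) : bool :=
  [forall x : T, forall y in J, (x <= y) ==> (x \in J)].

Definition conn_ideal (J : {set T}) : bool :=
  [&& J != set0, down_closed J & hasse_connected J].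

Definition Jconn : {set {set T}} := [set J : {set T} | conn_ideal J].

Definition intersect_nontriv (J1 J2 : {set T}) : bool :=
  [&& ~~ [disjoint J1 & J2], ~~ (J1 \subset J2) & ~~ (J2 \subset J1)].

Definition Pi : {set {set {set T}}} :=
  [set [set J1; J2] | J1 in Jconn, J2 in Jconn & intersect_nontriv J1 J2].

(* |J_conn(P)| - |Pi(P)| = |P|, stated without truncated subtraction *)
Definition ci_poset : Prop := #|Jconn| = #|Pi| + #|T|.

End CIPoset.
Arguments ci_poset {d} T.

From HB Require Import structures.
From mathcomp Require Import all_boot all_order.
Import Order.Theory.
Local Open Scope order_scope.
Set Implicit Arguments. Unset Strict Implicit. Unset Printing Implicit Defensive.

(* Every non-principal connected order ideal J is the union of a pair in Pi(P):
   grow a maximal connected ideal K inside J, leave K along a Hasse edge u < v, and K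
   and the principal ideal of v intersect nontrivially with union J.  Conversely such
   a union is never principal.  Hence |J_conn(P)| - |Pi(P)| = |P| says exactly that
   taking unions is injective on Pi(P).  For an embedding i : Q -> P, sending an ideal J
   of Q to the order ideal generated by i(J) maps Pi(Q) injectively into Pi(P) and
   commutes with unions, so injectivity passes from P to Q. *)

Section ConnectedIdeals.
Context {d : Order.disp_t} {T : finPOrderType d}.
Implicit Types (J K A : {set T}) (x y z : T).

Definition principal x : {set T} := [set y | y <= x].

Definition segment x y : {set T} := [set z | x <= z <= y].

Definition nonprincipal : {set {set T}} := Jconn :\: [set principal x | x : T].

Lemma down_closedP J :
  reflect (forall x y, y \in J -> x <= y -> x \in J) (down_closed J).
Proof.
apply: (iffP forallP) => [dcJ x y yJ le_xy | dcJ x].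
  by have /forall_inP/(_ y yJ)/implyP := dcJ x; apply.
by apply/forall_inP => y yJ; apply/implyP; apply: dcJ.
Qed.

Lemma hasse_connectedP J :
  reflect (forall x y, x \in J -> y \in J -> connect (hasse_rel J) x y)
          (hasse_connected J).
Proof.
apply: (iffP forall_inP) => [cJ x y xJ yJ | cJ x xJ].
  by have /forall_inP := cJ x xJ; apply.
by apply/forall_inP => y yJ; apply: cJ.
Qed.

Lemma JconnP J :
  reflect [/\ J != set0, down_closed J & hasse_connected J] (J \in Jconn).
Proof. by rewrite inE; apply: and3P. Qed.

Lemma Jconn_down_closed J : J \in Jconn -> down_closed J.
Proof. by case/JconnP. Qed.

Lemma hasse_rel_sym J : symmetric (hasse_rel J).
Proof. by move=> x y; rewrite /hasse_rel /hasse_adj andbCA orbC. Qed.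

Lemma hasse_adj_comparable x y : hasse_adj x y -> (x <= y) || (y <= x).
Proof. by case/orP => /andP [/ltW -> _]; rewrite ?orbT. Qed.

Lemma connect_hasse_subset J K x y :
  J \subset K -> connect (hasse_rel J) x y -> connect (hasse_rel K) x y.
Proof.
move=> sJK; apply: connect_sub => u v /and3P [uJ vJ adj_uv]; apply: connect1.
by rewrite /hasse_rel (subsetP sJK _ uJ) (subsetP sJK _ vJ).
Qed.

Lemma segment_properl x y z : x < z -> z < y -> segment x z \proper segment x y.
Proof.
move=> lt_xz lt_zy; apply/properP; split.
  by apply/subsetP => w; rewrite !inE => /andP [-> /le_trans ->]; rewrite ?ltW.
by exists y; rewrite !inE ?(ltW (lt_trans lt_xz lt_zy)) ?lexx //= lt_geF.
Qed.

Lemma segment_properr x y z : x < z -> z < y -> segment z y \proper segment x y.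
Proof.
move=> lt_xz lt_zy; apply/properP; split.
  by apply/subsetP => w; rewrite !inE => /andP [/(le_trans (ltW lt_xz)) -> ->].
by exists x; rewrite !inE ?(ltW (lt_trans lt_xz lt_zy)) ?lexx //= andbT lt_geF.
Qed.

(* Induction on the size of the segment [x, y]: either y covers x, or the segment
   splits at some x < z < y into two strictly smaller ones. *)
Lemma connect_hasse_le J x y :
  down_closed J -> y \in J -> x <= y -> connect (hasse_rel J) x y.
Proof.
move=> /down_closedP dcJ; have [n] := ubnP #|segment x y|.
elim: n x y => // n IH x y lt_seg yJ; rewrite le_eqVlt => /predU1P [-> // | lt_xy].
have xJ : x \in J by apply: dcJ yJ (ltW lt_xy).
case cov_xy: (covers x y).
  by apply: connect1; rewrite /hasse_rel xJ yJ /hasse_adj cov_xy.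
move: cov_xy; rewrite /covers lt_xy => /forallPn [z]; rewrite negbK => /andP [lt_xz lt_zy].
have zJ : z \in J by apply: dcJ yJ (ltW lt_zy).
apply: (@connect_trans _ _ z).
  apply: IH zJ (ltW lt_xz); rewrite -ltnS (leq_trans _ lt_seg) // ltnS.
  exact/proper_card/segment_properl.
apply: IH yJ (ltW lt_zy); rewrite -ltnS (leq_trans _ lt_seg) // ltnS.
exact/proper_card/segment_properr.
Qed.

Lemma connect_hasse_comparable J x y :
  down_closed J -> x \in J -> y \in J -> (x <= y) || (y <= x) ->
  connect (hasse_rel J) x y.
Proof.
move=> dcJ xJ yJ /orP [le_xy | le_yx]; first exact: connect_hasse_le.
by rewrite sym_connect_sym ?connect_hasse_le //; apply: hasse_rel_sym.
Qed.

Lemma principal_down_closed x : down_closed (principal x).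
Proof. by apply/down_closedP => u v; rewrite !inE => le_vx /le_trans ->. Qed.

Lemma principal_Jconn x : principal x \in Jconn.
Proof.
have xx : x \in principal x by rewrite inE.
apply/JconnP; split; [by apply/set0Pn; exists x | exact: principal_down_closed |].
apply/hasse_connectedP => u v uJ vJ; have dcx := principal_down_closed x.
apply: (@connect_trans _ _ x); apply: connect_hasse_comparable => //.
  by move: uJ; rewrite inE => ->.
by move: vJ; rewrite inE => ->; rewrite orbT.
Qed.

Lemma principal_subset J x : down_closed J -> x \in J -> principal x \subset J.
Proof. by move=> /down_closedP dcJ xJ; apply/subsetP => y; rewrite inE; apply: dcJ. Qed.

Lemma principal_inj : injective principal.
Proof.
move=> x y eq_xy; apply: le_anti.
have : x \in principal y by rewrite -eq_xy inE.
have : y \in principal x by rewrite eq_xy inE.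
by rewrite !inE => -> ->.
Qed.

Lemma setU_Jconn J K a :
  J \in Jconn -> K \in Jconn -> a \in J -> a \in K -> J :|: K \in Jconn.
Proof.
move=> /JconnP [_ /down_closedP dcJ /hasse_connectedP cJ].
move=> /JconnP [_ /down_closedP dcK /hasse_connectedP cK] aJ aK.
have to_a u : u \in J :|: K -> connect (hasse_rel (J :|: K)) u a.
  case/setUP => [uJ | uK].
    by apply: connect_hasse_subset (subsetUl _ _) _; apply: cJ.
  by apply: connect_hasse_subset (subsetUr _ _) _; apply: cK.
apply/JconnP; split.
- by apply/set0Pn; exists a; rewrite inE aJ.
- apply/down_closedP => u v /setUP [vJ | vK] le_uv; apply/setUP.
    by left; apply: dcJ vJ le_uv.
  by right; apply: dcK vK le_uv.
apply/hasse_connectedP => u v uJK vJK; apply: connect_trans (to_a u uJK) _.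
by rewrite sym_connect_sym; [exact: to_a | exact: hasse_rel_sym].
Qed.

Lemma hasse_boundary J A a b :
  hasse_connected J -> A \subset J -> a \in A -> b \in J -> b \notin A ->
  exists u v, [/\ u \in A, v \in J, v \notin A & hasse_adj u v].
Proof.
move=> /hasse_connectedP cJ sAJ aA bJ bA.
have /connectP [p] := cJ a b (subsetP sAJ _ aA) bJ.
elim: p a aA => [|c p IH] a aA /=; first by move=> _ eq_ba; rewrite eq_ba aA in bA.
case/andP => /and3P [_ cJc adj_ac] path_cp last_b.
case cA: (c \in A); first exact: IH path_cp last_b.
by exists a, c; rewrite cA.
Qed.

Lemma PiP S :
  reflect (exists J1 J2, [/\ J1 \in Jconn, J2 \in Jconn, intersect_nontriv J1 J2
                           & S = [set J1; J2]])
          (S \in Pi).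
Proof.
apply: (iffP imset2P) => [[J1 J2 J1conn] | [J1 [J2 [J1conn J2conn nt ->]]]].
  by rewrite inE => /andP [J2conn nt] ->; exists J1, J2.
by exists J1 J2 => //; rewrite inE J2conn.
Qed.

Lemma cover_set2 (A B : {set T}) : cover [set A; B] = A :|: B.
Proof. by rewrite /cover bigcup_setU !big_set1. Qed.

Lemma cover_Pi_nonprincipal S : S \in Pi -> cover S \in nonprincipal.
Proof.
case/PiP => J1 [J2 [J1conn J2conn /and3P [meet nsub12 nsub21] ->]].
have [a] : exists a, a \in J1 :&: J2 by apply/set0Pn; rewrite setI_eq0.
rewrite inE => /andP [aJ1 aJ2].
rewrite cover_set2 inE (setU_Jconn J1conn J2conn aJ1 aJ2) andbT.
apply/imsetP => -[x _ eq_x]; have : x \in J1 :|: J2 by rewrite eq_x inE.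
case/setUP => xJ.
  case/negP: nsub21; rewrite (subset_trans (subsetUr J1 J2)) // eq_x.
  exact/principal_subset/xJ/Jconn_down_closed.
case/negP: nsub12; rewrite (subset_trans (subsetUl J1 J2)) // eq_x.
exact/principal_subset/xJ/Jconn_down_closed.
Qed.

Lemma hasse_adj_leaving K u v :
  down_closed K -> u \in K -> v \notin K -> hasse_adj u v -> u < v.
Proof.
move=> /down_closedP dcK uK vK /orP [/andP [lt_uv _] // | /andP [lt_vu _]].
by rewrite (dcK v u uK (ltW lt_vu)) in vK.
Qed.

Lemma intersect_nontriv_principal K u v :
  u \in K -> v \notin K -> u <= v -> ~~ (K \subset principal v) ->
  intersect_nontriv K (principal v).
Proof.
move=> uK vK le_uv nsubKv; apply/and3P; split => //.
  by rewrite -setI_eq0; apply/set0Pn; exists u; rewrite !inE uK.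
by apply: contra vK => /subsetP; apply; rewrite inE.
Qed.

Lemma nonprincipal_cover_Pi J : J \in nonprincipal -> J \in cover @: Pi.
Proof.
rewrite inE => /andP [npJ /JconnP [/set0Pn [x0 x0J] dcJ cJ]].
pose inside K := (K \in Jconn) && (K \proper J).
have inside_x0 : inside (principal x0).
  rewrite /inside principal_Jconn properEneq principal_subset // andbT.
  by apply: contra npJ => /eqP <-; apply: imset_f.
have [K /andP [Kconn ltKJ] Kmax] := arg_maxnP (fun K : {set T} => #|K|) inside_x0.
have /JconnP [/set0Pn [a aK] dcK _] := Kconn.
have [b bJ bK] : exists2 b, b \in J & b \notin K by case/properP: ltKJ => _ [b]; exists b.
have [u [v [uK vJ vK /(hasse_adj_leaving dcK uK vK) lt_uv]]] :=
  hasse_boundary cJ (proper_sub ltKJ) aK bJ bK.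
have uv : u \in principal v by rewrite inE ltW.
have KvJ : K :|: principal v \subset J by rewrite subUset (proper_sub ltKJ) principal_subset.
have eq_KvJ : K :|: principal v = J.
  apply/eqP; rewrite eqEsubset KvJ /=; apply: contraT => nsubJ.
  have : inside (K :|: principal v).
    rewrite /inside (setU_Jconn Kconn (principal_Jconn v) uK uv) properEneq KvJ andbT.
    by apply: contra nsubJ => /eqP ->.
  have ltK : K \proper K :|: principal v.
    by apply/properP; split; [exact: subsetUl | exists v; rewrite ?inE ?lexx ?orbT].
  by move/Kmax/(leq_trans (proper_card ltK)); rewrite ltnn.
apply/imsetP; exists [set K; principal v]; last by rewrite cover_set2.
apply/PiP; exists K, (principal v); split; rewrite ?principal_Jconn //.
apply: intersect_nontriv_principal uK vK (ltW lt_uv) _.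
apply: contra npJ => sKv; apply/imsetP; exists v => //.
by rewrite -eq_KvJ; apply/setUidPr.
Qed.

Lemma nonprincipalE : nonprincipal = cover @: Pi.
Proof.
apply/setP => J; apply/idP/imsetP => [/nonprincipal_cover_Pi/imsetP // | [S SPi ->]].
exact: cover_Pi_nonprincipal.
Qed.

Lemma card_Jconn : #|@Jconn d T| = #|T| + #|nonprincipal|.
Proof.
have sub : [set principal x | x : T] \subset Jconn.
  by apply/subsetP => J /imsetP [x _ ->]; apply: principal_Jconn.
rewrite -(cardsID [set principal x | x : T] Jconn) (setIidPr sub).
by rewrite card_imset ?cardsT //; apply: principal_inj.
Qed.

Lemma ci_posetE : ci_poset T <-> {in @Pi d T &, injective cover}.
Proof.
rewrite /ci_poset card_Jconn nonprincipalE addnC.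
split => [/addIn eq_card | /imset_injP/eqP ->] //.
by apply/imset_injP; rewrite eq_card.
Qed.

End ConnectedIdeals.

Lemma connect_homo (T1 T2 : finType) (e1 : rel T1) (e2 : rel T2) (f : T1 -> T2) x y :
  (forall u v, e1 u v -> connect e2 (f u) (f v)) ->
  connect e1 x y -> connect e2 (f x) (f y).
Proof.
move=> homo_f /connectP [p]; elim: p x => [|z p IH] x /=; first by move=> _ ->.
case/andP => e_xz path_zp last_y.
exact: connect_trans (homo_f _ _ e_xz) (IH _ path_zp last_y).
Qed.

Section OrderEmbedding.
Context {dP dQ : Order.disp_t} {P : finPOrderType dP} {Q : finPOrderType dQ}.
Variable i : Q -> P.
Hypothesis le_i : forall q q', (i q <= i q') = (q <= q').
Implicit Types (J : {set Q}) (S : {set {set Q}}).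

Definition down_image (J : {set Q}) : {set P} := [set x | [exists u in J, x <= i u]].

Lemma mem_down_image J u : u \in J -> i u \in down_image J.
Proof. by move=> uJ; rewrite inE; apply/existsP; exists u; rewrite uJ lexx. Qed.

Lemma down_image_down_closed J : down_closed (down_image J).
Proof.
apply/down_closedP => x y; rewrite !inE => /exists_inP [u uJ le_yu] le_xy.
by apply/exists_inP; exists u; rewrite ?(le_trans le_xy le_yu).
Qed.

Lemma preim_down_image J : down_closed J -> i @^-1: down_image J = J.
Proof.
move=> /down_closedP dcJ; apply/setP => q; rewrite !inE.
apply/exists_inP/idP => [[u uJ] | qJ]; last by exists q; rewrite ?lexx.
by rewrite le_i; apply: dcJ.
Qed.

Lemma down_image_Jconn J : J \in Jconn -> down_image J \in Jconn.
Proof.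
move=> /JconnP [/set0Pn [u0 u0J] _ /hasse_connectedP cJ].
set D := down_image J; have dcD : down_closed D := down_image_down_closed J.
have to_image x : x \in D -> exists2 u, u \in J & connect (hasse_rel D) x (i u).
  move=> xD; have := xD; rewrite inE => /exists_inP [u uJ le_xu].
  by exists u; rewrite ?connect_hasse_comparable ?le_xu ?mem_down_image.
have connect_image u v : u \in J -> v \in J -> connect (hasse_rel D) (i u) (i v).
  move=> uJ vJ; apply: connect_homo (cJ u v uJ vJ).
  move=> a b /and3P [aJ bJ /hasse_adj_comparable cmp_ab].
  by apply: connect_hasse_comparable; rewrite ?mem_down_image ?le_i.
apply/JconnP; split => //; first by apply/set0Pn; exists (i u0); apply: mem_down_image.
apply/hasse_connectedP => x y xD yD.
have [u uJ conn_xu] := to_image x xD; have [v vJ conn_yv] := to_image y yD.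
apply: connect_trans conn_xu (connect_trans (connect_image u v uJ vJ) _).
by rewrite sym_connect_sym; [exact: conn_yv | exact: hasse_rel_sym].
Qed.

Lemma cover_down_image S :
  cover (down_image @: S) = down_image (cover S).
Proof.
rewrite cover_imset; apply/setP => x; rewrite inE.
apply/bigcupP/exists_inP => [[J JS] | [u /bigcupP [J JS uJ] le_xu]].
  by rewrite inE => /exists_inP [u uJ le_xu]; exists u => //; apply/bigcupP; exists J.
by exists J; rewrite // inE; apply/exists_inP; exists u.
Qed.

Lemma down_image_Pi S : S \in Pi -> down_image @: S \in Pi.
Proof.
case/PiP => J1 [J2 [J1conn J2conn /and3P [meet nsub12 nsub21] ->]].
have [dc1 dc2] := (Jconn_down_closed J1conn, Jconn_down_closed J2conn).
apply/PiP; exists (down_image J1), (down_image J2).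
split; rewrite ?down_image_Jconn ?imsetU1 ?imset_set1 //.
have [a] : exists a, a \in J1 :&: J2 by apply/set0Pn; rewrite setI_eq0.
rewrite inE => /andP [aJ1 aJ2]; apply/and3P; split.
- by rewrite -setI_eq0; apply/set0Pn; exists (i a); rewrite inE !mem_down_image.
- by apply: contra nsub12 => /(preimsetS i); rewrite !preim_down_image.
- by apply: contra nsub21 => /(preimsetS i); rewrite !preim_down_image.
Qed.

Lemma down_image_Pi_inj : {in Pi &, injective (fun S => down_image @: S)}.
Proof.
suff down_imageK :
    {in Pi, cancel (fun S => down_image @: S) (fun D => [set i @^-1: K | K : {set P} in D])}.
  exact: can_in_inj down_imageK.
move=> S /PiP [J1 [J2 [J1conn J2conn _ ->]]].
by rewrite !imsetU1 !imset_set1 !preim_down_image ?Jconn_down_closed.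
Qed.

End OrderEmbedding.

Theorem corollary10p3 (dP dQ : Order.disp_t) (P : finPOrderType dP)
    (Q : finPOrderType dQ) (i : Q -> P) :
  injective i ->
  (forall q q' : Q, (i q <= i q') = (q <= q')) ->
  ci_poset P -> ci_poset Q.
Proof.
(* Injectivity of i already follows from order reflection and antisymmetry. *)
move=> _ le_i /ci_posetE cover_injP; apply/ci_posetE => S1 S2 S1Pi S2Pi eq_cover.
apply: (down_image_Pi_inj le_i) => //; apply: cover_injP; rewrite ?down_image_Pi //.
by rewrite !cover_down_image eq_cover.
Qed.
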